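(* Consider $\mathbb{C}$ as a Frobenius algebra over $\mathbb{R}$ with the usual multiplication and unit, comultiplication determined by $\Delta(1)=1\otimes 1-i\otimes i$ (and $\Delta(a)=(a\otimes 1)\Delta(1)$), and counit $\varepsilon(1)=1$, $\varepsilon(i)=0$. Then the extended structures on this Frobenius algebra are exactly: (a) $\phi=\mathrm{id}_{\mathbb{C}}$ and $\theta=\pm\sqrt2$; (b) $\phi(z)=\overline z$ (complex conjugation) and $\theta=0$. Moreover, these three extended Frobenius algebras are pairwise non-isomorphic.
   Context: A Frobenius algebra over a field $K$ is a tuple $(A,m,u,\Delta,\varepsilon)$ where $(A,m,u)$ is an associative unital $K$-algebra and $(A,\Delta,\varepsilon)$ is a coassociative counital $K$-coalgebra satisfying $(a\otimes 1_A)\Delta(b)=\Delta(ab)=\Delta(a)(1_A\otimes b)$. A morphism of Frobenius algebras is both an algebra and coalgebra morphism. An extended structure on $A$ is a pair $(\phi,\theta)$, $\phi:A\to A$ $K$-linear, $\theta\in A$, with: (i) $\phi$ a Frobenius algebra morphism with $\phi^2=\mathrm{id}_A$; (ii) $\phi(\theta a)=\theta a$ for all $a\in A$; (iii) $m(\phi\otimes\mathrm{id}_A)\Delta(1_A)=\theta^2$. A morphism of extended Frobenius algebras $f:(A,\phi_A,\theta_A)\to(B,\phi_B,\theta_B)$ is a Frobenius algebra morphism with $f\phi_A=\phi_Bf$ and $f(\theta_A)=\theta_B$. *)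

From HB Require Import structures.
From mathcomp Require Import all_boot all_order all_algebra.
From mathcomp Require Import complex.
From mathcomp Require Import reals.
Set Implicit Arguments. Unset Strict Implicit. Unset Printing Implicit Defensive.
Import Order.TTheory GRing.Theory Num.Theory.
Local Open Scope ring_scope.
Local Open Scope complex_scope.

(* The real numbers are modelled by an arbitrary R : realType (complete
   archimedean ordered field, i.e. the reals), and C = R[i]. *)
Section FrobC.
Variable R : realType.
Local Notation C := R[i].

Definition cbasis (j : 'I_2) : C := if j == ord0 then 1 else 'i.
Definition ccoord (j : 'I_2) (z : C) : R := if j == ord0 then complex.Re z else complex.Im z.

(* C (x)_R C is modelled by 2x2 real matrices: T = sum_{j,k} T j k e_j (x) e_k *)
Definition tensC := 'M[R]_2.
Definition tens (x y : C) : tensC := \matrix_(j, k) (ccoord j x * ccoord k y).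

Definition mC (T : tensC) : C :=
  \sum_(j < 2) \sum_(k < 2) (T j k)%:C * (cbasis j * cbasis k).

Definition tmap (f g : C -> C) (T : tensC) : tensC :=
  \sum_(j < 2) \sum_(k < 2) T j k *: tens (f (cbasis j)) (g (cbasis k)).

(* comultiplication: Delta(a) = (a (x) 1) Delta(1), Delta(1) = 1(x)1 - i(x)i *)
Definition DeltaC (a : C) : tensC := tens a 1 - tens (a * 'i) 'i.
(* counit: eps(1) = 1, eps(i) = 0 *)
Definition epsC (z : C) : R := complex.Re z.

Definition Rlinear (f : C -> C) : Prop :=
  forall (r : R) (x y : C), f (r%:C * x + y) = r%:C * f x + f y.

Definition frob_morph (f : C -> C) : Prop :=
  [/\ Rlinear f,
      f 1 = 1,
      (forall x y, f (x * y) = f x * f y),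
      (forall a, DeltaC (f a) = tmap f f (DeltaC a)) &
      (forall a, epsC (f a) = epsC a)].

Definition ext_structure (phi : C -> C) (theta : C) : Prop :=
  [/\ frob_morph phi,
      (forall a, phi (phi a) = a),
      (forall a, phi (theta * a) = theta * a) &
      mC (tmap phi id (DeltaC 1)) = theta ^+ 2].

Definition ext_morph (phi1 : C -> C) (theta1 : C) (phi2 : C -> C) (theta2 : C)
    (f : C -> C) : Prop :=
  [/\ frob_morph f, (forall a, f (phi1 a) = phi2 (f a)) & f theta1 = theta2].

Definition ext_iso (phi1 : C -> C) (theta1 : C) (phi2 : C -> C) (theta2 : C) : Prop :=
  exists f g, [/\ ext_morph phi1 theta1 phi2 theta2 f,
                  ext_morph phi2 theta2 phi1 theta1 g,
                  (forall a, g (f a) = a) & (forall b, f (g b) = b)].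
End FrobC.

From HB Require Import structures.
From mathcomp Require Import all_boot all_order all_algebra.
From mathcomp Require Import complex.
From mathcomp Require Import reals.
From mathcomp Require Import ring lra.
From Stdlib Require Import FunctionalExtensionality.
Import Order.TTheory GRing.Theory Num.Theory.
Local Open Scope ring_scope.
Local Open Scope complex_scope.

(* An R-linear unital endomorphism of C fixes the reals, so it is determined
   by the image of i; if it is also multiplicative, that image squares to -1,
   leaving only the identity and conjugation.  The extended-structure axiom
   (iii) reads 1 - phi(i) i = theta^2, i.e. theta^2 = 2 for the identity and
   theta^2 = 0 for conjugation.  Finally every Frobenius morphism fixes the
   real number theta = +-sqrt 2, so it cannot send it to -theta or to 0. *)

Section RlinearEndomorphism.
Variables (R : realType) (f : R[i] -> R[i]).
Hypotheses (f_lin : Rlinear f) (f1 : f 1 = 1).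

Lemma Rlinear0 : f 0 = 0.
Proof.
have := f_lin 1 0 0; rewrite mulr0 addr0 rmorph1 mul1r -{1}[f 0]addr0.
by move/addrI.
Qed.

Lemma Rlinear_real (r : R) : f r%:C = r%:C.
Proof. by rewrite -[r%:C]addr0 -{1}[r%:C]mulr1 f_lin f1 Rlinear0 mulr1. Qed.

Lemma Rlinear_unitalE (z : R[i]) : f z = (complex.Re z)%:C + (complex.Im z)%:C * f 'i.
Proof.
have zE : z = (complex.Re z)%:C * 1 + ((complex.Im z)%:C * 'i + 0).
  by rewrite mulr1 addr0 mulrC -complexE.
by rewrite {1}zE !f_lin f1 Rlinear0 mulr1 addr0.
Qed.

Lemma Rlinear_multiplicative_idVconj :
  (forall x y, f (x * y) = f x * f y) -> f =1 id \/ f =1 @conjc R.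
Proof.
move=> fM.
have fi2 : f 'i ^+ 2 = 'i ^+ 2.
  by rewrite expr2 -fM -expr2 sqr_i -(rmorphN1 (real_complex R)) Rlinear_real.
have /orP[/eqP fi|/eqP fi] : (f 'i == 'i) || (f 'i == - 'i) by rewrite -eqf_sqr fi2.
- by left=> -[a b]; rewrite Rlinear_unitalE fi; apply/eqP;
    rewrite eq_complex /=; apply/andP; split; apply/eqP; ring.
- by right=> -[a b]; rewrite Rlinear_unitalE fi; apply/eqP;
    rewrite eq_complex /=; apply/andP; split; apply/eqP; ring.
Qed.

End RlinearEndomorphism.

Section FrobeniusC.
Variable R : realType.
Implicit Types (phi f : R[i] -> R[i]) (theta : R[i]).

Lemma mC_tmap_Delta1 phi : mC (tmap phi id (DeltaC 1)) = phi 1 - phi 'i * 'i.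
Proof.
rewrite /mC /tmap !big_ord_recl !big_ord0 /DeltaC /tens /cbasis /ccoord /= !mxE /=.
case: (phi 1) => [a b]; case: (phi 'i) => [c d].
by apply/eqP; rewrite eq_complex /=; apply/andP; split; apply/eqP; ring.
Qed.

Lemma frob_morph_id : frob_morph (@id R[i]).
Proof.
split=> // -[a1 a2]; apply/matrixP=> j k.
rewrite /tmap !big_ord_recl !big_ord0 /DeltaC /tens /cbasis /ccoord !mxE /=.
by case: j => [[|[|j]] hj] //=; case: k => [[|[|k]] hk] //=; ring.
Qed.

Lemma frob_morph_conjc : frob_morph (@conjc R).
Proof.
split.
- by move=> r x y; rewrite rmorphD rmorphM /= oppr0.
- exact: rmorph1.
- exact: rmorphM.
- move=> [a1 a2]; apply/matrixP=> j k.
  rewrite /tmap !big_ord_recl !big_ord0 /DeltaC /tens /cbasis /ccoord !mxE /=.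
  by case: j => [[|[|j]] hj] //=; case: k => [[|[|k]] hk] //=; ring.
- by case.
Qed.

Lemma frob_morph_real f (r : R) : frob_morph f -> f r%:C = r%:C.
Proof. by case=> f_lin f1 _ _ _; apply: Rlinear_real. Qed.

Lemma ext_structure_idVconj phi theta :
  ext_structure phi theta -> phi =1 id \/ phi =1 @conjc R.
Proof. by case=> -[f_lin f1 fM _ _] _ _ _; apply: Rlinear_multiplicative_idVconj. Qed.

Lemma ext_structure_id theta : ext_structure id theta <-> theta ^+ 2 = 2.
Proof.
have Delta1E : mC (tmap id id (DeltaC 1)) = 2 :> R[i].
  by rewrite mC_tmap_Delta1 /= -expr2 sqr_i opprK.
split=> [[_ _ _]|theta2]; first by rewrite Delta1E.
by split=> //; [exact: frob_morph_id | rewrite Delta1E].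
Qed.

Lemma ext_structure_conjc theta : ext_structure (@conjc R) theta <-> theta = 0.
Proof.
have Delta1E : mC (tmap (@conjc R) id (DeltaC 1)) = 0.
  by rewrite mC_tmap_Delta1; apply/eqP; rewrite eq_complex /=; apply/andP; split;
    apply/eqP; ring.
split=> [[_ _ _]|->]; first by rewrite Delta1E => /esym/eqP; rewrite sqrf_eq0 => /eqP.
split; [exact: frob_morph_conjc | exact: conjcK | by move=> a; rewrite mul0r conjc0 |].
by rewrite Delta1E expr0n.
Qed.

Lemma sqrC_eq2 theta :
  theta ^+ 2 = 2 <-> theta = (Num.sqrt 2)%:C \/ theta = - (Num.sqrt 2)%:C.
Proof.
have -> : 2 = (Num.sqrt (2 : R))%:C ^+ 2 by rewrite -rmorphXn sqr_sqrtr ?rmorph_nat.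
by split=> [/eqP|[]->]; rewrite ?sqrrN // eqf_sqr => /orP[]/eqP; [left|right].
Qed.

Lemma ext_iso_real_theta phi1 phi2 (r : R) theta :
  ext_iso phi1 r%:C phi2 theta -> theta = r%:C.
Proof. by case=> f [g [[/frob_morph_real fr _ <-] _ _ _]]. Qed.

End FrobeniusC.

Theorem mainTheorem3 (R : realType) :
  (forall (phi : R[i] -> R[i]) (theta : R[i]),
     ext_structure phi theta <->
     ((forall z, phi z = z) /\
        (theta = (Num.sqrt (2 : R))%:C \/ theta = - (Num.sqrt (2 : R))%:C))
     \/ ((forall z, phi z = z^*) /\ theta = 0))
  /\ ~ ext_iso id (Num.sqrt (2 : R))%:C id (- (Num.sqrt (2 : R))%:C)
  /\ ~ ext_iso id (Num.sqrt (2 : R))%:C (@conjc R) 0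
  /\ ~ ext_iso id (- (Num.sqrt (2 : R))%:C) (@conjc R) 0.
Proof.
have sqrt2_gt0 : 0 < Num.sqrt (2 : R) by rewrite sqrtr_gt0 ltr0n.
split; last split; last split.
- move=> phi theta; split.
  + move=> phi_theta; case/ext_structure_idVconj: (phi_theta);
      move=> /functional_extensionality phiE; move: phi_theta; rewrite phiE.
    * by move/ext_structure_id/sqrC_eq2; left.
    * by move/ext_structure_conjc; right.
  + case=> [[/functional_extensionality -> /sqrC_eq2/ext_structure_id] //|].
    by case=> /functional_extensionality -> /ext_structure_conjc.
- by rewrite -rmorphN => /ext_iso_real_theta/complexI; lra.
- by move/ext_iso_real_theta/esym/complexI; lra.
- by rewrite -rmorphN => /ext_iso_real_theta/esym/complexI; lra.
Qed.
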